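(* Let $N\ge 2$, $0<p<1\le q$ with $pq<1$, and let $(u,v)$ be a positive radially symmetric solution of $\Delta u=v^p$, $\Delta v=|\nabla u|^q$ in $\mathbb{R}^N$, written as functions of $r=|x|$. For $t=\ln r\in\mathbb{R}$ define $$Y(t)=\frac{rv'(r)}{v(r)},\qquad Z(t)=\frac{rv^p(r)}{u'(r)},\qquad W(t)=\frac{r\,(u'(r))^q}{v'(r)}.$$ Then for all $t\in\mathbb{R}$: $$0\le Y(t)\le\frac{2+q}{1-pq},\qquad N\le Z(t)\le N+\frac{p(2+q)}{1-pq},\qquad N+q\le W(t)\le N-2+\frac{2+q}{1-pq}.$$
   Context: A positive radially symmetric solution is a pair of radially symmetric functions $u,v\in C^2(\mathbb{R}^N)$, positive everywhere, satisfying the equations pointwise; for such solutions $u'(r)>0$ and $v'(r)>0$ for $r>0$, so $Y,Z,W$ are well defined. *)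

From Stdlib Require Import Reals Lra.
Open Scope R_scope.

(* Points of R^N are represented as functions nat -> R; only the
   coordinates 0..N-1 are used. *)
Fixpoint sumN (n : nat) (f : nat -> R) : R :=
  match n with
  | O => 0
  | S k => sumN k f + f k
  end.

Definition enorm (N : nat) (x : nat -> R) : R := sqrt (sumN N (fun i => x i ^ 2)).

Definition edist (N : nat) (x y : nat -> R) : R := enorm N (fun i => y i - x i).

Definition upd (x : nat -> R) (i : nat) (s : R) : nat -> R :=
  fun j => if Nat.eqb j i then s else x j.

Definition is_partial (f : (nat -> R) -> R) (i : nat) (x : nat -> R) (l : R) : Prop :=
  derivable_pt_lim (fun s => f (upd x i s)) (x i) l.

Definition contN (N : nat) (g : (nat -> R) -> R) : Prop :=
  forall x eps, 0 < eps -> exists delta, 0 < delta /\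
    forall y, edist N x y < delta -> Rabs (g y - g x) < eps.

Definition C2_with (N : nat) (f : (nat -> R) -> R)
  (D1 : nat -> (nat -> R) -> R) (D2 : nat -> nat -> (nat -> R) -> R) : Prop :=
  contN N f /\
  (forall i x, (i < N)%nat -> is_partial f i x (D1 i x)) /\
  (forall i, (i < N)%nat -> contN N (D1 i)) /\
  (forall i j x, (i < N)%nat -> (j < N)%nat -> is_partial (D1 i) j x (D2 i j x)) /\
  (forall i j, (i < N)%nat -> (j < N)%nat -> contN N (D2 i j)).

Definition laplacian (N : nat) (D2 : nat -> nat -> (nat -> R) -> R) (x : nat -> R) : R :=
  sumN N (fun i => D2 i i x).
Definition gradnorm (N : nat) (D1 : nat -> (nat -> R) -> R) (x : nat -> R) : R :=
  sqrt (sumN N (fun i => D1 i x ^ 2)).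

(* a^q for a >= 0, q > 0, with the convention 0^q = 0
   (Stdlib's Rpower 0 q is 1, which would be wrong here). *)
Definition rpow0 (a q : R) : R := if Rle_dec a 0 then 0 else Rpower a q.

Definition radial_positive_solution (N : nat) (p q : R) (u v : R -> R) : Prop :=
  (forall r, 0 <= r -> 0 < u r /\ 0 < v r) /\
  exists DU1 DU2 DV1 DV2,
    C2_with N (fun x => u (enorm N x)) DU1 DU2 /\
    C2_with N (fun x => v (enorm N x)) DV1 DV2 /\
    (forall x, laplacian N DU2 x = Rpower (v (enorm N x)) p) /\
    (forall x, laplacian N DV2 x = rpow0 (gradnorm N DU1 x) q).

(* Along a ray r = |x| the system reads u'' + (N-1) u'/r = v^p, v'' + (N-1) v'/r = (u')^q.
   Each of the six inequalities is the positivity of a quantity Phi built from r, v, u', v'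
   which is bounded near r = 0 and satisfies Phi' + (N-1) Phi / r = psi, i.e.
   (r^(N-1) Phi)' = r^(N-1) psi; as r^(N-1) Phi vanishes at 0, Phi >= 0 on (0, R) as soon
   as psi >= 0 on (0, R). For the lower bounds psi is successively v^p, (u')^q, a positive multiple of
   v', and a positive multiple of the quantity behind Z >= N. With K = (2+q)/(1-pq) the upper
   bounds form a cycle: Y < K up to R gives Z < N + pK up to R, which gives
   W < N - 2 + K up to R, and that last quantity is the derivative of K v - r v'. Since
   K v - r v' tends to K v(0) > 0 at the origin, a continuity argument closes the cycle. *)

From Stdlib Require Import Reals Lra Lia Classical FunctionalExtensionality.
Open Scope R_scope.

(** * Calculus on the half-line *)

Lemma derivable_pt_lim_eq f x l l' :
  derivable_pt_lim f x l -> l = l' -> derivable_pt_lim f x l'.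
Proof. now intros H <-. Qed.

Lemma derivable_pt_lim_Rpower_comp f c x l : 0 < f x -> derivable_pt_lim f x l ->
  derivable_pt_lim (fun y => Rpower (f y) c) x (c * Rpower (f x) c / f x * l).
Proof.
  intros Hpos Hf. eapply derivable_pt_lim_eq.
  - exact (derivable_pt_lim_comp f (fun z => Rpower z c) x l _ Hf
             (derivable_pt_lim_power (f x) c Hpos)).
  - assert (E : Rpower (f x) c = Rpower (f x) (c - 1) * f x).
    { rewrite <- (Rpower_1 (f x)) at 3 by lra. rewrite <- Rpower_plus. f_equal; ring. }
    rewrite E. field. lra.
Qed.

Lemma Rpower_gt_0 a c : 0 < Rpower a c.
Proof. apply exp_pos. Qed.

Lemma derivable_pt_lim_mul_id_0 k :
  continuity_pt k 0 -> derivable_pt_lim (fun h => k h * h) 0 (k 0).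
Proof.
  intros Hk eps Heps.
  destruct (Hk eps Heps) as (a & Ha & Hclose); simpl in Hclose; unfold R_dist in Hclose.
  exists (mkposreal a Ha). simpl. intros h Hh0 Hha.
  replace ((k (0 + h) * (0 + h) - k 0 * 0) / h) with (k h) by (rewrite Rplus_0_l; field; auto).
  apply Hclose. split; [split; [exact I | auto] |]. rewrite Rminus_0_r. exact Hha.
Qed.

Lemma Rle_div_of_mul_le a b c : 0 < b -> c * b <= a -> c <= a / b.
Proof. intros Hb H. apply (Rmult_le_reg_r b); auto. unfold Rdiv. rewrite Rmult_assoc, Rinv_l; lra. Qed.

Lemma Rdiv_le_of_le_mul a b c : 0 < b -> a <= c * b -> a / b <= c.
Proof. intros Hb H. apply (Rmult_le_reg_r b); auto. unfold Rdiv. rewrite Rmult_assoc, Rinv_l; lra. Qed.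

Definition bounded_near0 (g : R -> R) : Prop :=
  exists d B, 0 < d /\ forall r, 0 < r < d -> Rabs (g r) <= B.

Definition right_cont0 (g : R -> R) : Prop :=
  forall eps, 0 < eps -> exists d, 0 < d /\ forall r, 0 < r < d -> Rabs (g r - g 0) < eps.

Definition vanishes_at0 (g : R -> R) : Prop :=
  forall eps, 0 < eps -> exists d, 0 < d /\ forall r, 0 < r < d -> Rabs (g r) < eps.

Lemma bounded_near0_const c : bounded_near0 (fun _ => c).
Proof. exists 1, (Rabs c). split; [lra|]. intros; lra. Qed.

Lemma bounded_near0_id : bounded_near0 (fun r => r).
Proof. exists 1, 1. split; [lra|]. intros r Hr. rewrite Rabs_pos_eq; lra. Qed.

Lemma bounded_near0_mult g h :
  bounded_near0 g -> bounded_near0 h -> bounded_near0 (fun r => g r * h r).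
Proof.
  intros (d1 & B1 & Hd1 & H1) (d2 & B2 & Hd2 & H2).
  exists (Rmin d1 d2), (B1 * B2). split; [now apply Rmin_pos|].
  intros r Hr. pose proof (Rmin_l d1 d2). pose proof (Rmin_r d1 d2).
  rewrite Rabs_mult. apply Rmult_le_compat; try apply Rabs_pos; [apply H1 | apply H2]; lra.
Qed.

Lemma bounded_near0_minus g h :
  bounded_near0 g -> bounded_near0 h -> bounded_near0 (fun r => g r - h r).
Proof.
  intros (d1 & B1 & Hd1 & H1) (d2 & B2 & Hd2 & H2).
  exists (Rmin d1 d2), (B1 + B2). split; [now apply Rmin_pos|].
  intros r Hr. pose proof (Rmin_l d1 d2). pose proof (Rmin_r d1 d2).
  pose proof (Rabs_triang (g r) (- h r)). rewrite Rabs_Ropp in H3.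
  specialize (H1 r ltac:(lra)). specialize (H2 r ltac:(lra)). unfold Rminus. lra.
Qed.

Lemma bounded_near0_Rpower g c : 0 <= c -> (forall r, 0 < r -> 0 < g r) ->
  bounded_near0 g -> bounded_near0 (fun r => Rpower (g r) c).
Proof.
  intros Hc Hpos (d & B & Hd & HB). exists d, (Rpower B c). split; auto.
  intros r Hr. rewrite Rabs_pos_eq by (left; apply Rpower_gt_0).
  pose proof (Hpos r ltac:(lra)). pose proof (Rle_abs (g r)). pose proof (HB r Hr).
  apply Rle_Rpower_l; lra.
Qed.

Lemma bounded_near0_of_right_cont0 g : right_cont0 g -> bounded_near0 g.
Proof.
  intros Hg. destruct (Hg 1 ltac:(lra)) as (d & Hd & Hclose).
  exists d, (Rabs (g 0) + 1). split; auto. intros r Hr.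
  pose proof (Rabs_triang_inv (g r) (g 0)). pose proof (Hclose r Hr). lra.
Qed.

Lemma vanishes_at0_pow_mul k g : bounded_near0 g -> vanishes_at0 (fun r => r ^ S k * g r).
Proof.
  intros (d & B & Hd & HB) eps Heps.
  set (B' := Rabs B + 1). assert (HB' : 0 < B') by (unfold B'; pose proof (Rabs_pos B); lra).
  exists (Rmin d (Rmin 1 (eps / B'))).
  split; [apply Rmin_pos; [lra | apply Rmin_pos; [lra | now apply Rdiv_lt_0_compat]]|].
  intros r Hr. pose proof (Rmin_l d (Rmin 1 (eps / B'))). pose proof (Rmin_r d (Rmin 1 (eps / B'))).
  pose proof (Rmin_l 1 (eps / B')). pose proof (Rmin_r 1 (eps / B')).
  assert (Hrk : 0 <= r ^ k <= 1).
  { split; [apply pow_le; lra | rewrite <- (pow1 k); apply pow_incr; lra]. }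
  assert (Hg : Rabs (g r) <= B') by (pose proof (HB r ltac:(lra)); pose proof (Rle_abs B); unfold B'; lra).
  assert (Hr_eps : r * B' < eps).
  { assert (Hlt : r < eps / B') by lra. apply (Rmult_lt_compat_r B') in Hlt; auto.
    unfold Rdiv in Hlt. rewrite Rmult_assoc, Rinv_l in Hlt; lra. }
  assert (Hprod : r ^ k * Rabs (g r) <= B').
  { rewrite <- (Rmult_1_l B'). apply Rmult_le_compat; try lra; apply Rabs_pos. }
  rewrite Rabs_mult, Rabs_pos_eq by (apply pow_le; lra). simpl. rewrite Rmult_assoc.
  apply (Rmult_le_compat_l r) in Hprod; lra.
Qed.

Lemma nonneg_of_vanishes_at0 G G' R0 : vanishes_at0 G ->
  (forall r, 0 < r < R0 -> derivable_pt_lim G r (G' r)) ->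
  (forall r, 0 < r < R0 -> 0 <= G' r) ->
  forall r, 0 < r < R0 -> 0 <= G r.
Proof.
  intros Hvan HG HG' r Hr. apply Rnot_lt_le. intros Hneg.
  destruct (Hvan (- G r) ltac:(lra)) as (d & Hd & Hsmall).
  set (s := Rmin d r / 2).
  assert (Hs : 0 < s < r /\ s < d).
  { pose proof (Rmin_l d r). pose proof (Rmin_r d r). pose proof (Rmin_pos d r Hd ltac:(lra)).
    unfold s. lra. }
  destruct (MVT_cor2 G G' s r) as (c & Hmvt & Hc); [lra | intros; apply HG; lra |].
  pose proof (HG' c ltac:(lra)). pose proof (Hsmall s ltac:(lra)).
  pose proof (Rle_abs (- G s)). rewrite Rabs_Ropp in H1. nra.
Qed.

Lemma pos_of_vanishes_at0 G G' R0 : vanishes_at0 G ->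
  (forall r, 0 < r < R0 -> derivable_pt_lim G r (G' r)) ->
  (forall r, 0 < r < R0 -> 0 < G' r) ->
  forall r, 0 < r < R0 -> 0 < G r.
Proof.
  intros Hvan HG HG' r Hr.
  assert (0 <= G (r / 2)) by (apply (nonneg_of_vanishes_at0 G G' R0); auto; [intros; left; auto | lra]).
  destruct (MVT_cor2 G G' (r / 2) r) as (c & Hmvt & Hc); [lra | intros; apply HG; lra |].
  pose proof (HG' c ltac:(lra)). nra.
Qed.

Lemma derivable_pt_lim_weighted k Phi psi r : 0 < r ->
  derivable_pt_lim Phi r (psi r - (INR k + 1) * (Phi r / r)) ->
  derivable_pt_lim (fun s => s ^ S k * Phi s) r (r ^ S k * psi r).
Proof.
  intros Hr HPhi. eapply derivable_pt_lim_eq.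
  - apply derivable_pt_lim_mult; [apply derivable_pt_lim_pow | exact HPhi].
  - rewrite S_INR. simpl. field. lra.
Qed.

Lemma nonneg_of_weighted_ode k Phi psi R0 : bounded_near0 Phi ->
  (forall r, 0 < r < R0 -> derivable_pt_lim Phi r (psi r - (INR k + 1) * (Phi r / r))) ->
  (forall r, 0 < r < R0 -> 0 <= psi r) ->
  forall r, 0 < r < R0 -> 0 <= Phi r.
Proof.
  intros Hbdd HPhi Hpsi r Hr.
  assert (Hpow : 0 < r ^ S k) by (apply pow_lt; lra).
  enough (0 <= r ^ S k * Phi r) by nra.
  apply (nonneg_of_vanishes_at0 (fun s => s ^ S k * Phi s) (fun s => s ^ S k * psi s) R0); auto.
  - now apply vanishes_at0_pow_mul.
  - intros s Hs. apply derivable_pt_lim_weighted; [lra | auto].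
  - intros s Hs. apply Rmult_le_pos; [apply pow_le; lra | auto].
Qed.

Lemma pos_of_weighted_ode k Phi psi R0 : bounded_near0 Phi ->
  (forall r, 0 < r < R0 -> derivable_pt_lim Phi r (psi r - (INR k + 1) * (Phi r / r))) ->
  (forall r, 0 < r < R0 -> 0 < psi r) ->
  forall r, 0 < r < R0 -> 0 < Phi r.
Proof.
  intros Hbdd HPhi Hpsi r Hr.
  assert (Hpow : 0 < r ^ S k) by (apply pow_lt; lra).
  enough (0 < r ^ S k * Phi r) by nra.
  apply (pos_of_vanishes_at0 (fun s => s ^ S k * Phi s) (fun s => s ^ S k * psi s) R0); auto.
  - now apply vanishes_at0_pow_mul.
  - intros s Hs. apply derivable_pt_lim_weighted; [lra | auto].
  - intros s Hs. apply Rmult_lt_0_compat; [apply pow_lt; lra | auto].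
Qed.

Lemma pos_by_continuous_induction f :
  (forall r, 0 < r -> continuity_pt f r) ->
  (exists d, 0 < d /\ forall r, 0 < r < d -> 0 < f r) ->
  (forall R0, 0 < R0 -> (forall r, 0 < r < R0 -> 0 < f r) -> 0 < f R0) ->
  forall r, 0 < r -> 0 < f r.
Proof.
  intros Hcont (d & Hd & Hbase) Hstep r0 Hr0. apply Rnot_le_lt. intros Hr0_neg.
  set (E := fun x => 0 < x /\ forall y, 0 < y < x -> 0 < f y).
  assert (HE_bound : bound E).
  { exists r0. intros x [Hx Hfx]. apply Rnot_lt_le. intros Hlt.
    pose proof (Hfx r0 ltac:(lra)). lra. }
  destruct (completeness E HE_bound) as [m [Hub Hlub]]; [now exists d |].
  assert (Hm : d <= m) by (apply Hub; now split).
  assert (Hbelow : forall y, 0 < y < m -> 0 < f y).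
  { intros y Hy. destruct (classic (exists x, E x /\ y < x)) as [(x & [_ Hfx] & Hyx) | Hnone].
    - apply Hfx; lra.
    - exfalso. enough (m <= y) by lra. apply Hlub. intros x Ex.
      apply Rnot_lt_le. intros Hyx. apply Hnone. now exists x. }
  pose proof (Hstep m ltac:(lra) Hbelow) as Hfm.
  destruct (Hcont m ltac:(lra) (f m) Hfm) as (eta & Heta & Hclose).
  simpl in Hclose. unfold R_dist in Hclose.
  assert (Hext : E (m + eta / 2)).
  { split; [lra|]. intros y Hy. destruct (Rlt_le_dec y m) as [Hym | Hym]; [apply Hbelow; lra |].
    destruct (Req_dec y m) as [-> | Hne]; [exact Hfm |].
    assert (Hfy : Rabs (f y - f m) < f m) by (apply Hclose; split; [split; [exact I | auto] | rewrite Rabs_pos_eq; lra]).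
    pose proof (Rle_abs (- (f y - f m))). rewrite Rabs_Ropp in H. lra. }
  pose proof (Hub _ Hext). lra.
Qed.

(** * Radial functions on R^N *)

Definition axis (s : R) : nat -> R := upd (fun _ => 0) 0 s.

Lemma sumN_ext n f g : (forall i, (i < n)%nat -> f i = g i) -> sumN n f = sumN n g.
Proof. induction n; simpl; intros H; auto. rewrite IHn, H by (auto; lia). reflexivity. Qed.

Lemma sumN_plus n f g : sumN n (fun j => f j + g j) = sumN n f + sumN n g.
Proof. induction n; simpl; [lra | rewrite IHn; lra]. Qed.

Lemma sumN_indicator n k c : (k < n)%nat -> sumN n (fun j => if Nat.eqb j k then c else 0) = c.
Proof.
  enough (H : sumN n (fun j => if Nat.eqb j k then c else 0) = if Nat.ltb k n then c else 0).
  { intros Hk. rewrite H. now apply Nat.ltb_lt in Hk as ->. }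
  induction n; simpl; auto. rewrite IHn.
  destruct (Nat.eqb_spec n k), (Nat.ltb_spec k n), (Nat.ltb_spec k (S n)); lia || lra.
Qed.

Lemma sumN_first_const n f b : (1 <= n)%nat -> (forall i, (1 <= i < n)%nat -> f i = b) ->
  sumN n f = f 0%nat + (INR n - 1) * b.
Proof.
  intros Hn Hb. induction n as [| n IH]; [lia |]. destruct n.
  - simpl. ring.
  - change (sumN (S (S n)) f) with (sumN (S n) f + f (S n)).
    rewrite IH by first [lia | intros; apply Hb; lia]. rewrite (Hb (S n)) by lia. rewrite (S_INR (S n)). ring.
Qed.

Lemma enorm_ext N x y : (forall i, (i < N)%nat -> x i = y i) -> enorm N x = enorm N y.
Proof. intros H. unfold enorm. f_equal. apply sumN_ext. intros i Hi. now rewrite H. Qed.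

Lemma enorm_axis N s : (1 <= N)%nat -> enorm N (axis s) = Rabs s.
Proof.
  intros HN. unfold enorm. rewrite (sumN_ext N _ (fun j => if Nat.eqb j 0 then s ^ 2 else 0)).
  - rewrite sumN_indicator, <- Rsqr_pow2 by lia. apply sqrt_Rsqr_abs.
  - intros i Hi. unfold axis, upd. destruct (Nat.eqb i 0); auto. ring.
Qed.

Lemma enorm_upd_axis N s i t : (1 <= i < N)%nat ->
  enorm N (upd (axis s) i t) = sqrt (s ^ 2 + t ^ 2).
Proof.
  intros Hi. unfold enorm. f_equal.
  rewrite (sumN_ext N _ (fun j => (if Nat.eqb j 0 then s ^ 2 else 0) + (if Nat.eqb j i then t ^ 2 else 0))).
  - rewrite sumN_plus, !sumN_indicator by lia. reflexivity.
  - intros j Hj. unfold axis, upd.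
    destruct (Nat.eqb_spec j i), (Nat.eqb_spec j 0); subst; try lia; ring.
Qed.

Lemma edist_axis N a b : (1 <= N)%nat -> edist N (axis a) (axis b) = Rabs (b - a).
Proof.
  intros HN. unfold edist. rewrite <- (enorm_axis N (b - a)) by auto. apply enorm_ext.
  intros i Hi. unfold axis, upd. destruct (Nat.eqb i 0); ring.
Qed.

Lemma derivable_pt_lim_sqrt_sum_sq s t : 0 < s ->
  derivable_pt_lim (fun y => sqrt (s ^ 2 + y ^ 2)) t (t / sqrt (s ^ 2 + t ^ 2)).
Proof.
  intros Hs. assert (Hpos : 0 < s ^ 2 + t ^ 2) by (pose proof (pow2_ge_0 t); pose proof (pow_lt s 2 Hs); lra).
  eapply derivable_pt_lim_eq.
  - apply (derivable_pt_lim_comp (fun y => s ^ 2 + y ^ 2) sqrt t).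
    + apply derivable_pt_lim_plus; [apply derivable_pt_lim_const | apply derivable_pt_lim_pow].
    + now apply derivable_pt_lim_sqrt.
  - pose proof (sqrt_lt_R0 _ Hpos). unfold fct_cte.
    replace (INR 2 * t ^ Init.Nat.pred 2) with (2 * t) by (simpl; ring). field. lra.
Qed.

Section RadialProfile.
Variables (N : nat) (f f' : R -> R) (D1 : nat -> (nat -> R) -> R) (D2 : nat -> nat -> (nat -> R) -> R).
Hypothesis HN : (1 <= N)%nat.
Hypothesis Hf' : forall r, 0 < r -> derivable_pt_lim f r (f' r).
Hypothesis HC2 : C2_with N (fun x => f (enorm N x)) D1 D2.

Lemma D1_0_axis s : 0 < s -> D1 0 (axis s) = f' s.
Proof.
  intros Hs. destruct HC2 as (_ & HD1 & _). specialize (HD1 0%nat (axis s) ltac:(lia)).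
  unfold is_partial in HD1. replace (axis s 0%nat) with s in HD1 by reflexivity.
  apply (uniqueness_limite _ s _ _ HD1).
  apply derivable_pt_lim_ext with (f := comp f Rabs).
  - intros y. unfold comp. rewrite <- (enorm_axis N y) by lia. f_equal. apply enorm_ext.
    intros i Hi. unfold axis, upd. destruct (Nat.eqb i 0); auto.
  - eapply derivable_pt_lim_eq; [apply derivable_pt_lim_comp |].
    + apply Rabs_derive_1. lra.
    + rewrite Rabs_pos_eq by lra. now apply Hf'.
    + ring.
Qed.

Lemma D1_upd_axis s i t : 0 < s -> (1 <= i < N)%nat ->
  D1 i (upd (axis s) i t) = f' (sqrt (s ^ 2 + t ^ 2)) * (t / sqrt (s ^ 2 + t ^ 2)).
Proof.
  intros Hs Hi. destruct HC2 as (_ & HD1 & _). specialize (HD1 i (upd (axis s) i t) ltac:(lia)).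
  unfold is_partial in HD1. replace (upd (axis s) i t i) with t in HD1 by (unfold upd; now rewrite Nat.eqb_refl).
  apply (uniqueness_limite _ t _ _ HD1).
  assert (Hpos : 0 < s ^ 2 + t ^ 2) by (pose proof (pow2_ge_0 t); pose proof (pow_lt s 2 Hs); lra).
  apply derivable_pt_lim_ext with (f := comp f (fun y => sqrt (s ^ 2 + y ^ 2))).
  - intros y. unfold comp. f_equal. rewrite <- (enorm_upd_axis N s i y) by lia. apply enorm_ext.
    intros j Hj. unfold upd. destruct (Nat.eqb j i); auto.
  - eapply derivable_pt_lim_eq; [apply derivable_pt_lim_comp |].
    + now apply derivable_pt_lim_sqrt_sum_sq.
    + apply Hf'. now apply sqrt_lt_R0.
    + ring.
Qed.

Lemma D1_axis s i : 0 < s -> (1 <= i < N)%nat -> D1 i (axis s) = 0.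
Proof.
  intros Hs Hi. replace (axis s) with (upd (axis s) i 0).
  - rewrite D1_upd_axis by auto. unfold Rdiv. ring.
  - apply functional_extensionality. intros j. unfold axis, upd.
    destruct (Nat.eqb_spec j i), (Nat.eqb_spec j 0); subst; auto; lia.
Qed.

Lemma continuity_pt_radial_derivative s : 0 < s -> continuity_pt f' s.
Proof.
  intros Hs eps Heps. destruct HC2 as (_ & _ & HD1c & _).
  destruct (HD1c 0%nat ltac:(lia) (axis s) eps Heps) as (d & Hd & Hclose).
  exists (Rmin d s). split; [now apply Rmin_pos |]. intros y [_ Hy]. simpl in *. unfold R_dist in *.
  pose proof (Rmin_l d s). pose proof (Rmin_r d s).
  assert (0 < y) by (pose proof (Rle_abs (- (y - s))); rewrite Rabs_Ropp in H1; lra).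
  rewrite <- D1_0_axis, <- (D1_0_axis s) by auto. apply Hclose. rewrite edist_axis by auto. lra.
Qed.

Lemma D2_axis s i : 0 < s -> (1 <= i < N)%nat -> D2 i i (axis s) = f' s / s.
Proof.
  intros Hs Hi. destruct HC2 as (_ & _ & _ & HD2 & _). specialize (HD2 i i (axis s) ltac:(lia) ltac:(lia)).
  unfold is_partial in HD2. replace (axis s i) with 0 in HD2 by (unfold axis, upd; destruct (Nat.eqb_spec i 0); [lia | auto]).
  apply (uniqueness_limite _ 0 _ _ HD2).
  set (rho := fun y => sqrt (s ^ 2 + y ^ 2)).
  assert (Hrho0 : rho 0 = s) by (unfold rho; rewrite pow_i, Rplus_0_r by lia; apply sqrt_pow2; lra).
  assert (Hrho_pos : forall y, 0 < rho y).
  { intros y. apply sqrt_lt_R0. pose proof (pow2_ge_0 y). pose proof (pow_lt s 2 Hs). lra. }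
  assert (Hcont : continuity_pt (fun y => f' (rho y) / rho y) 0).
  { assert (Hrho_cont : continuity_pt rho 0).
    { apply derivable_continuous_pt. eexists. now apply derivable_pt_lim_sqrt_sum_sq. }
    apply (continuity_pt_div (comp f' rho) rho 0); auto.
    - apply continuity_pt_comp; auto. rewrite Hrho0. now apply continuity_pt_radial_derivative.
    - specialize (Hrho_pos 0). lra. }
  apply derivable_pt_lim_ext with (f := fun h => f' (rho h) / rho h * h).
  - intros h. rewrite D1_upd_axis by auto. fold (rho h). specialize (Hrho_pos h). field. lra.
  - eapply derivable_pt_lim_eq; [now apply derivable_pt_lim_mul_id_0 |]. simpl. now rewrite Hrho0.
Qed.

Lemma radial_ode s : 0 < s ->
  derivable_pt_lim f' s (laplacian N D2 (axis s) - (INR N - 1) * (f' s / s)).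
Proof.
  intros Hs. unfold laplacian. rewrite (sumN_first_const N _ (f' s / s)) by (auto; intros; now apply D2_axis).
  replace (D2 0%nat 0%nat (axis s) + (INR N - 1) * (f' s / s) - (INR N - 1) * (f' s / s))
    with (D2 0%nat 0%nat (axis s)) by ring.
  destruct HC2 as (_ & _ & _ & HD2 & _). specialize (HD2 0%nat 0%nat (axis s) ltac:(lia) ltac:(lia)).
  unfold is_partial in HD2. replace (axis s 0%nat) with s in HD2 by reflexivity.
  apply (derivable_pt_lim_locally_ext _ f' s 0 (2 * s)) in HD2; [exact HD2 | lra |].
  intros y Hy. rewrite <- D1_0_axis by lra. f_equal. apply functional_extensionality.
  intros j. unfold axis, upd. destruct (Nat.eqb j 0); auto.
Qed.

Lemma gradnorm_axis s : 0 < s -> gradnorm N D1 (axis s) = Rabs (f' s).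
Proof.
  intros Hs. unfold gradnorm.
  rewrite (sumN_ext N _ (fun j => if Nat.eqb j 0 then f' s ^ 2 else 0)).
  - rewrite sumN_indicator, <- Rsqr_pow2 by lia. apply sqrt_Rsqr_abs.
  - intros i Hi. destruct (Nat.eqb_spec i 0) as [-> | Hne].
    + now rewrite D1_0_axis.
    + rewrite D1_axis by (auto; lia). ring.
Qed.

Lemma bounded_near0_radial_derivative : bounded_near0 f'.
Proof.
  destruct HC2 as (_ & _ & HD1c & _).
  destruct (HD1c 0%nat ltac:(lia) (axis 0) 1 ltac:(lra)) as (d & Hd & Hclose).
  exists d, (Rabs (D1 0%nat (axis 0)) + 1). split; auto. intros s Hs.
  rewrite <- D1_0_axis by lra.
  assert (Hnear : Rabs (D1 0%nat (axis s) - D1 0%nat (axis 0)) < 1)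
    by (apply Hclose; rewrite edist_axis, Rminus_0_r, Rabs_pos_eq by (auto; lra); lra).
  pose proof (Rabs_triang_inv (D1 0%nat (axis s)) (D1 0%nat (axis 0))). lra.
Qed.

Lemma right_cont0_radial_profile : right_cont0 f.
Proof.
  intros eps Heps. destruct HC2 as (Hc & _).
  destruct (Hc (axis 0) eps Heps) as (d & Hd & Hclose). exists d. split; auto. intros s Hs.
  specialize (Hclose (axis s) ltac:(rewrite edist_axis, Rminus_0_r, Rabs_pos_eq by (auto; lra); lra)).
  rewrite !enorm_axis, Rabs_R0, (Rabs_pos_eq s) in Hclose by (auto; lra). exact Hclose.
Qed.

End RadialProfile.

(** * The radial system *)

Section RadialSystem.
(* The dimension is N = k + 2. *)
Variables (k : nat) (p q : R) (v u' v' : R -> R).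
Hypotheses (Hp : 0 < p) (Hq : 0 < q) (Hpq : p * q < 1).
Hypothesis Hv_pos : forall r, 0 < r -> 0 < v r.
Hypothesis Hv0 : 0 < v 0.
Hypothesis Hv_cont0 : right_cont0 v.
Hypothesis Hv_der : forall r, 0 < r -> derivable_pt_lim v r (v' r).
Hypothesis Hu'_ode : forall r, 0 < r ->
  derivable_pt_lim u' r (Rpower (v r) p - (INR k + 1) * (u' r / r)).
Hypothesis Hv'_ode : forall r, 0 < r ->
  derivable_pt_lim v' r (rpow0 (Rabs (u' r)) q - (INR k + 1) * (v' r / r)).
Hypothesis Hu'_bdd : bounded_near0 u'.
Hypothesis Hv'_bdd : bounded_near0 v'.

Let K := (2 + q) / (1 - p * q).

Lemma bounded_near0_v : bounded_near0 v.
Proof. now apply bounded_near0_of_right_cont0. Qed.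

#[local] Hint Resolve bounded_near0_const bounded_near0_id bounded_near0_mult bounded_near0_minus
  bounded_near0_Rpower bounded_near0_v Rlt_le : bounded.

Lemma u'_pos r : 0 < r -> 0 < u' r.
Proof.
  intros Hr. apply (pos_of_weighted_ode k u' (fun s => Rpower (v s) p) (r + 1)); [auto | | | lra].
  - intros s Hs. apply Hu'_ode. lra.
  - intros; apply Rpower_gt_0.
Qed.

Lemma v'_ode r : 0 < r -> derivable_pt_lim v' r (Rpower (u' r) q - (INR k + 1) * (v' r / r)).
Proof.
  intros Hr. pose proof (u'_pos r Hr). specialize (Hv'_ode r Hr).
  unfold rpow0 in Hv'_ode. rewrite Rabs_pos_eq in Hv'_ode by lra.
  destruct (Rle_dec (u' r) 0); [lra | exact Hv'_ode].
Qed.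

Lemma v'_pos r : 0 < r -> 0 < v' r.
Proof.
  intros Hr. apply (pos_of_weighted_ode k v' (fun s => Rpower (u' s) q) (r + 1)); [auto | | | lra].
  - intros s Hs. apply v'_ode. lra.
  - intros; apply Rpower_gt_0.
Qed.

Lemma lower_bound_Z r : 0 < r -> (INR k + 2) * u' r <= r * Rpower (v r) p.
Proof.
  intros Hr. enough (0 <= r * Rpower (v r) p - (INR k + 2) * u' r) by lra.
  apply (nonneg_of_weighted_ode k (fun s => s * Rpower (v s) p - (INR k + 2) * u' s)
           (fun s => p * Rpower (v s) p * (s * v' s) / v s) (r + 1));
    [auto with bounded | | | lra].
  - intros s Hs. pose proof (Hv_pos s ltac:(lra)). eapply derivable_pt_lim_eq.
    + apply derivable_pt_lim_minus.
      * apply derivable_pt_lim_mult; [apply derivable_pt_lim_id |].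
        apply derivable_pt_lim_Rpower_comp; auto. apply Hv_der. lra.
      * apply derivable_pt_lim_mult; [apply derivable_pt_lim_const | apply Hu'_ode; lra].
    + unfold fct_cte. field. lra.
  - intros s Hs. pose proof (Hv_pos s ltac:(lra)). pose proof (v'_pos s ltac:(lra)).
    pose proof (Rpower_gt_0 (v s) p). left. apply Rdiv_lt_0_compat; auto.
    repeat apply Rmult_lt_0_compat; lra.
Qed.

Lemma lower_bound_W r : 0 < r -> (INR k + 2 + q) * v' r <= r * Rpower (u' r) q.
Proof.
  intros Hr. enough (0 <= r * Rpower (u' r) q - (INR k + 2 + q) * v' r) by lra.
  apply (nonneg_of_weighted_ode k (fun s => s * Rpower (u' s) q - (INR k + 2 + q) * v' s)
           (fun s => q * Rpower (u' s) q * (s * Rpower (v s) p - (INR k + 2) * u' s) / u' s) (r + 1));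
    [auto using u'_pos with bounded | | | lra].
  - intros s Hs. pose proof (u'_pos s ltac:(lra)). eapply derivable_pt_lim_eq.
    + apply derivable_pt_lim_minus.
      * apply derivable_pt_lim_mult; [apply derivable_pt_lim_id |].
        apply derivable_pt_lim_Rpower_comp; auto. apply Hu'_ode. lra.
      * apply derivable_pt_lim_mult; [apply derivable_pt_lim_const | apply v'_ode; lra].
    + unfold fct_cte. field. lra.
  - intros s Hs. pose proof (u'_pos s ltac:(lra)). pose proof (lower_bound_Z s ltac:(lra)).
    pose proof (Rpower_gt_0 (u' s) q). unfold Rdiv. apply Rmult_le_pos; [| left; now apply Rinv_0_lt_compat].
    apply Rmult_le_pos; [apply Rmult_le_pos |]; lra.
Qed.

Lemma derivable_pt_lim_Kv_sub_rv' r : 0 < r ->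
  derivable_pt_lim (fun s => K * v s - s * v' s) r ((INR k + K) * v' r - r * Rpower (u' r) q).
Proof.
  intros Hr. eapply derivable_pt_lim_eq.
  - apply derivable_pt_lim_minus.
    + apply derivable_pt_lim_mult; [apply derivable_pt_lim_const | now apply Hv_der].
    + apply derivable_pt_lim_mult; [apply derivable_pt_lim_id | now apply v'_ode].
  - unfold fct_cte. field. lra.
Qed.

Lemma upper_bound_Z_upto R0 : (forall r, 0 < r < R0 -> r * v' r < K * v r) ->
  forall r, 0 < r < R0 -> r * Rpower (v r) p < (INR k + 2 + p * K) * u' r.
Proof.
  intros HY r Hr. enough (0 < (INR k + 2 + p * K) * u' r - r * Rpower (v r) p) by lra.
  apply (pos_of_weighted_ode k (fun s => (INR k + 2 + p * K) * u' s - s * Rpower (v s) p)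
           (fun s => p * Rpower (v s) p * (K * v s - s * v' s) / v s) R0);
    [auto with bounded | | | exact Hr].
  - intros s Hs. pose proof (Hv_pos s ltac:(lra)). eapply derivable_pt_lim_eq.
    + apply derivable_pt_lim_minus.
      * apply derivable_pt_lim_mult; [apply derivable_pt_lim_const | apply Hu'_ode; lra].
      * apply derivable_pt_lim_mult; [apply derivable_pt_lim_id |].
        apply derivable_pt_lim_Rpower_comp; auto. apply Hv_der. lra.
    + unfold fct_cte. field. lra.
  - intros s Hs. pose proof (Hv_pos s ltac:(lra)). pose proof (HY s Hs).
    pose proof (Rpower_gt_0 (v s) p). apply Rdiv_lt_0_compat; auto.
    apply Rmult_lt_0_compat; [apply Rmult_lt_0_compat |]; lra.
Qed.

Lemma upper_bound_W_upto R0 :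
  (forall r, 0 < r < R0 -> r * Rpower (v r) p < (INR k + 2 + p * K) * u' r) ->
  forall r, 0 < r < R0 -> r * Rpower (u' r) q < (INR k + K) * v' r.
Proof.
  intros HZ r Hr. enough (0 < (INR k + K) * v' r - r * Rpower (u' r) q) by lra.
  apply (pos_of_weighted_ode k (fun s => (INR k + K) * v' s - s * Rpower (u' s) q)
           (fun s => q * Rpower (u' s) q * ((INR k + 2 + p * K) * u' s - s * Rpower (v s) p) / u' s) R0);
    [auto using u'_pos with bounded | | | exact Hr].
  - intros s Hs. pose proof (u'_pos s ltac:(lra)). eapply derivable_pt_lim_eq.
    + apply derivable_pt_lim_minus.
      * apply derivable_pt_lim_mult; [apply derivable_pt_lim_const | apply v'_ode; lra].
      * apply derivable_pt_lim_mult; [apply derivable_pt_lim_id |].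
        apply derivable_pt_lim_Rpower_comp; auto. apply Hu'_ode. lra.
    + (* uses K (1 - p q) = 2 + q *)
      unfold fct_cte, K. field. repeat split; lra.
  - intros s Hs. pose proof (u'_pos s ltac:(lra)). pose proof (HZ s Hs).
    pose proof (Rpower_gt_0 (u' s) q). apply Rdiv_lt_0_compat; auto.
    apply Rmult_lt_0_compat; [apply Rmult_lt_0_compat |]; lra.
Qed.

Lemma upper_bound_Y r : 0 < r -> r * v' r < K * v r.
Proof.
  intros Hr. enough (0 < K * v r - r * v' r) by lra. assert (HK : 0 < K) by (apply Rdiv_lt_0_compat; lra).
  apply (pos_by_continuous_induction (fun s => K * v s - s * v' s)); auto.
  - intros s Hs. apply derivable_continuous_pt. eexists. now apply derivable_pt_lim_Kv_sub_rv'.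
  - destruct (Hv_cont0 (v 0 / 2) ltac:(lra)) as (d1 & Hd1 & Hv_near).
    destruct (vanishes_at0_pow_mul 0 v' Hv'_bdd (K * v 0 / 2)) as (d2 & Hd2 & Hv'_near).
    { apply Rdiv_lt_0_compat; nra. }
    exists (Rmin d1 d2). split; [now apply Rmin_pos |]. intros s Hs.
    pose proof (Rmin_l d1 d2). pose proof (Rmin_r d1 d2).
    specialize (Hv_near s ltac:(lra)). specialize (Hv'_near s ltac:(lra)). rewrite pow_1 in Hv'_near.
    apply Rabs_def2 in Hv_near. apply Rabs_def2 in Hv'_near. nra.
  - intros R0 HR0 HY.
    (* On (0, R0) the cycle of upper bounds makes the derivative of K v - r v' positive. *)
    assert (HW : forall s, 0 < s < R0 -> 0 < (INR k + K) * v' s - s * Rpower (u' s) q).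
    { intros s Hs. enough (s * Rpower (u' s) q < (INR k + K) * v' s) by lra.
      apply (upper_bound_W_upto R0); auto. apply upper_bound_Z_upto.
      intros x Hx. specialize (HY x Hx). lra. }
    destruct (MVT_cor2 (fun s => K * v s - s * v' s) (fun s => (INR k + K) * v' s - s * Rpower (u' s) q)
                (R0 / 2) R0) as (c & Hmvt & Hc); [lra | intros; apply derivable_pt_lim_Kv_sub_rv'; lra |].
    pose proof (HW c ltac:(lra)). pose proof (HY (R0 / 2) ltac:(lra)). nra.
Qed.

Lemma upper_bound_Z r : 0 < r -> r * Rpower (v r) p < (INR k + 2 + p * K) * u' r.
Proof. intros Hr. apply (upper_bound_Z_upto (r + 1)); [intros; apply upper_bound_Y |]; lra. Qed.

Lemma upper_bound_W r : 0 < r -> r * Rpower (u' r) q < (INR k + K) * v' r.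
Proof. intros Hr. apply (upper_bound_W_upto (r + 1)); [intros; apply upper_bound_Z |]; lra. Qed.

Lemma radial_system_bounds r : 0 < r ->
  (0 <= r * v' r / v r <= K) /\
  (INR k + 2 <= r * Rpower (v r) p / u' r <= INR k + 2 + p * K) /\
  (INR k + 2 + q <= r * Rpower (u' r) q / v' r <= INR k + K).
Proof.
  intros Hr. pose proof (Hv_pos r Hr). pose proof (u'_pos r Hr). pose proof (v'_pos r Hr).
  pose proof (lower_bound_Z r Hr). pose proof (lower_bound_W r Hr).
  pose proof (upper_bound_Y r Hr). pose proof (upper_bound_Z r Hr). pose proof (upper_bound_W r Hr).
  repeat split; first [apply Rdiv_le_of_le_mul | apply Rle_div_of_mul_le]; nra.
Qed.

End RadialSystem.

Theorem lemma7p3 (N : nat) (p q : R) (u v u' v' : R -> R) :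
  (2 <= N)%nat -> 0 < p -> p < 1 -> 1 <= q -> p * q < 1 ->
  radial_positive_solution N p q u v ->
  (forall r, 0 < r -> derivable_pt_lim u r (u' r)) ->
  (forall r, 0 < r -> derivable_pt_lim v r (v' r)) ->
  forall t : R,
    let r := exp t in
    let Y := r * v' r / v r in
    let Z := r * Rpower (v r) p / u' r in
    let W := r * Rpower (u' r) q / v' r in
    (0 <= Y <= (2 + q) / (1 - p * q)) /\
    (INR N <= Z <= INR N + p * (2 + q) / (1 - p * q)) /\
    (INR N + q <= W <= INR N - 2 + (2 + q) / (1 - p * q)).
Proof.
  intros HN Hp _ Hq Hpq [Hpos (DU1 & DU2 & DV1 & DV2 & HCu & HCv & Hlap_u & Hlap_v)] Hu Hv t r Y Z W.
  assert (HN1 : (1 <= N)%nat) by lia.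
  set (k := (N - 2)%nat).
  assert (Hk : INR N = INR k + 2).
  { unfold k. replace N with (S (S (N - 2))) at 1 by lia. rewrite !S_INR. ring. }
  assert (Hu'_ode : forall s, 0 < s ->
            derivable_pt_lim u' s (Rpower (v s) p - (INR k + 1) * (u' s / s))).
  { intros s Hs. eapply derivable_pt_lim_eq; [exact (radial_ode N u u' DU1 DU2 HN1 Hu HCu s Hs) |].
    rewrite Hlap_u, enorm_axis, Rabs_pos_eq, Hk by (auto; lra). ring. }
  assert (Hv'_ode : forall s, 0 < s ->
            derivable_pt_lim v' s (rpow0 (Rabs (u' s)) q - (INR k + 1) * (v' s / s))).
  { intros s Hs. eapply derivable_pt_lim_eq; [exact (radial_ode N v v' DV1 DV2 HN1 Hv HCv s Hs) |].
    rewrite Hlap_v, (gradnorm_axis N u u' DU1 DU2), Hk by auto. ring. }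
  destruct (radial_system_bounds k p q v u' v' Hp ltac:(lra) Hpq (fun s Hs => proj2 (Hpos s ltac:(lra)))
              (proj2 (Hpos 0 ltac:(lra))) (right_cont0_radial_profile N v DV1 DV2 HN1 HCv) Hv
              Hu'_ode Hv'_ode (bounded_near0_radial_derivative N u u' DU1 DU2 HN1 Hu HCu)
              (bounded_near0_radial_derivative N v v' DV1 DV2 HN1 Hv HCv) r (exp_pos t))
    as (HY & HZ & HW).
  rewrite Hk. replace (INR k + 2 - 2) with (INR k) by ring.
  replace (p * (2 + q) / (1 - p * q)) with (p * ((2 + q) / (1 - p * q))) by (field; lra).
  auto.
Qed.
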